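(* Let $E$ be an effect algebra. Consider the functor $\mathbf{EA}\to E\downarrow\mathbf{EA}$ sending an effect algebra $F$ to the object $\iota_{E,F}\colon E\to E\otimes F$, $a\mapsto a\otimes 1$ (and a homomorphism $g\colon F\to F'$ to $\mathrm{id}_E\otimes g$). This functor admits a right adjoint which sends an object $h\colon E\to G$ of $E\downarrow\mathbf{EA}$ to the effect algebra $[E,G]_h$. Concretely, morphisms $\iota_{E,F}\to h$ in $E\downarrow\mathbf{EA}$ are in natural bijection with effect algebra homomorphisms $F\to[E,G]_h$, where a bimorphism $\beta\colon E\times F\to G$ with $\beta(a,1)=h(a)$ corresponds to $b\mapsto\beta(-,b)$.
   Context: Effect algebras: partial algebras $(E;\oplus,',0,1)$ with $\oplus$ commutative and associative (Kleene identities), $a\oplus b=1$ iff $b=a'$, $a\oplus 1$ defined iff $a=0$. $\mathbf{EA}$ is the category of effect algebras with homomorphisms (maps preserving existing orthosums and $1$). A bihomomorphism $\beta\colon E\times F\to G$ is a map such that each $\beta(a,-)$, $\beta(-,b)$ preserves existing orthosums (and $0$) and $\beta(1,1)=1$. The tensor product $E\otimes F$ is an effect algebra with a bihomomorphism $\otimes\colon E\times F\to E\otimes F$ through which every bihomomorphism $E\times F\to G$ factors uniquely via an effect algebra homomorphism; it exists for all $E,F$. $E\downarrow\mathbf{EA}$ is the under category: objects are homomorphisms $E\to G$, morphisms $(f\colon E\to G)\to(f'\colon E\to G')$ are homomorphisms $k\colon G\to G'$ with $k\circ f=f'$. For $h\colon E\to G$, $[E,G]_h$ is the set of maps $g\colon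 E\to G$ with $g(0)=0$ preserving existing orthosums and with $g(a)\le h(a)$ for all $a$; it is an effect algebra under pointwise partial sum with top element $h$ and $g'=h\ominus g$ pointwise. *)

From Stdlib Require Import Classical.

(* A partial algebra (E; (+), 0, 1).  [osum E a b c] means: a (+) b is
   defined and equals c. *)
Record PA := { car :> Type; osum : car -> car -> car -> Prop;
               ezero : car; eone : car }.

(* Effect algebra axioms. The orthosupplement a' is the unique b with
   a (+) b = 1 ; 0 = 1'. *)
Definition is_EA (E : PA) : Prop :=
  (forall a b c c', osum E a b c -> osum E a b c' -> c = c') /\
  (forall a b c, osum E a b c -> osum E b a c) /\
  (forall a b c ab abc, osum E a b ab -> osum E ab c abc ->
     exists bc, osum E b c bc /\ osum E a bc abc) /\
  (forall a, exists! b, osum E a b (eone E)) /\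
  osum E (eone E) (ezero E) (eone E) /\
  (forall a c, osum E a (eone E) c -> a = ezero E).

Record EA := { ea :> PA; ea_ax : is_EA ea }.

Definition ole (E : PA) (a b : E) : Prop := exists c, osum E a c b.

Definition is_hom (E F : PA) (f : E -> F) : Prop :=
  f (eone E) = eone F /\
  (forall a b c, osum E a b c -> osum F (f a) (f b) (f c)).

Definition is_bihom (E F G : PA) (beta : E -> F -> G) : Prop :=
  (forall a, beta a (ezero F) = ezero G /\
     forall b c d, osum F b c d -> osum G (beta a b) (beta a c) (beta a d)) /\
  (forall b, beta (ezero E) b = ezero G /\
     forall a c d, osum E a c d -> osum G (beta a b) (beta c b) (beta d b)) /\
  beta (eone E) (eone F) = eone G.

Definition is_tensor (E F T : EA) (t : E -> F -> T) : Prop :=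
  is_bihom E F T t /\
  forall (G : EA) (beta : E -> F -> G), is_bihom E F G beta ->
    exists! k : T -> G, is_hom T G k /\ forall a b, k (t a b) = beta a b.

Lemma ea_compl_zero (E : EA) (x y : E) :
  osum E x y (eone E) -> osum E y (ezero E) y.
Proof.
  destruct (ea_ax E) as [Hf [Hc [Ha [Hu [H10 Hz]]]]].
  intro Hxy.
  destruct (Ha _ _ _ _ _ Hxy H10) as [bc [H1 H2]].
  destruct (Hu x) as [u [Hu1 Hu2]].
  assert (bc = y) as ->.
  { transitivity u; [symmetry|]; apply Hu2; assumption. }
  exact H1.
Qed.

Lemma ea_sum0 (E : EA) (a : E) : osum E a (ezero E) a.
Proof.
  destruct (ea_ax E) as [Hf [Hc [Ha [Hu [H10 Hz]]]]].
  destruct (Hu a) as [a' [Ha' _]].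
  apply (ea_compl_zero E a'). apply Hc; exact Ha'.
Qed.

Lemma ea_idem0 (E : EA) (x : E) : osum E x x x -> x = ezero E.
Proof.
  destruct (ea_ax E) as [Hf [Hc [Ha [Hu [H10 Hz]]]]].
  intro Hxx.
  destruct (Hu x) as [x' [Hx' _]].
  destruct (Ha _ _ _ _ _ Hxx Hx') as [bc [H1 H2]].
  assert (bc = eone E) as -> by (eapply Hf; eassumption).
  eapply Hz; exact H2.
Qed.

Lemma hom_zero (E G : EA) (h : E -> G) :
  is_hom E G h -> h (ezero E) = ezero G.
Proof.
  intros [_ Hs]. apply ea_idem0. apply Hs. apply ea_sum0.
Qed.

Definition in_Hh (E G : EA) (h : E -> G) (g : E -> G) : Prop :=
  g (ezero E) = ezero G /\
  (forall a b c, osum E a b c -> osum G (g a) (g b) (g c)) /\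
  (forall a, ole G (g a) (h a)).

Lemma in_Hh_zero (E G : EA) (h : E -> G) :
  in_Hh E G h (fun _ => ezero G).
Proof.
  destruct (ea_ax G) as [Hf [Hc _]].
  split; [reflexivity|split].
  - intros; apply ea_sum0.
  - intro a. exists (h a). apply Hc, ea_sum0.
Qed.

Lemma in_Hh_top (E G : EA) (h : E -> G) :
  is_hom E G h -> in_Hh E G h h.
Proof.
  intro Hh. split; [apply hom_zero; exact Hh|split].
  - apply Hh.
  - intro a. exists (ezero G). apply ea_sum0.
Qed.

Definition Hh_PA (E G : EA) (h : E -> G) (Hh : is_hom E G h) : PA :=
  {| car := { g : E -> G | in_Hh E G h g };
     osum := fun x y z => forall a,
       osum G (proj1_sig x a) (proj1_sig y a) (proj1_sig z a);
     ezero := exist _ (fun _ => ezero G) (in_Hh_zero E G h);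
     eone := exist _ h (in_Hh_top E G h Hh) |}.

(* Sums in [E,G]_h are computed pointwise, so every effect-algebra law for [E,G]_h
   reduces to the same law in G; the only work is to check that the pointwise
   candidates (the second summand in associativity, the supplement h a (-) g a)
   are again additive and bounded by h, which follows from the interchange law
   (a + b) + (c + d) = (a + c) + (b + d) of G.  A homomorphism F -> [E,G]_h is
   then literally a bihomomorphism E x F -> G with beta(-, 1) = h, and the
   universal property of the tensor product finishes the bijection. *)
From Stdlib Require Import FunctionalExtensionality ProofIrrelevance ClassicalEpsilon.

Section EffectAlgebraLaws.
Variable G : EA.

Lemma osum_fun (a b c c' : G) : osum G a b c -> osum G a b c' -> c = c'.
Proof. exact (proj1 (ea_ax G) a b c c'). Qed.

Lemma osum_comm (a b c : G) : osum G a b c -> osum G b a c.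
Proof. exact (proj1 (proj2 (ea_ax G)) a b c). Qed.

Lemma osum_assoc (a b c ab abc : G) : osum G a b ab -> osum G ab c abc ->
  exists bc, osum G b c bc /\ osum G a bc abc.
Proof. exact (proj1 (proj2 (proj2 (ea_ax G))) a b c ab abc). Qed.

Lemma osum_assoc_r (a b c bc abc : G) : osum G b c bc -> osum G a bc abc ->
  exists ab, osum G a b ab /\ osum G ab c abc.
Proof.
  intros Hbc Habc.
  destruct (osum_assoc _ _ _ _ _ (osum_comm _ _ _ Hbc) (osum_comm _ _ _ Habc))
    as [ba [Hba Hs]].
  exists ba; split; apply osum_comm; assumption.
Qed.

Lemma osum_interchange (a b c d ab cd s : G) :
  osum G a b ab -> osum G c d cd -> osum G ab cd s ->
  exists ac bd, osum G a c ac /\ osum G b d bd /\ osum G ac bd s.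
Proof.
  intros Hab Hcd Hs.
  destruct (osum_assoc _ _ _ _ _ Hab Hs) as [bcd [Hbcd Habcd]].
  destruct (osum_assoc _ _ _ _ _ Hcd (osum_comm _ _ _ Hbcd)) as [db [Hdb Hcdb]].
  destruct (osum_assoc_r _ _ _ _ _ Hcdb Habcd) as [ac [Hac Hacdb]].
  exists ac, db; split; [|split]; [exact Hac | apply osum_comm; exact Hdb | exact Hacdb].
Qed.

(* With c' the supplement of c, both b (+) c' and b' (+) c' are the supplement of a. *)
Lemma osum_cancel (a b b' c : G) : osum G a b c -> osum G a b' c -> b = b'.
Proof.
  destruct (ea_ax G) as [_ [_ [_ [Hsupp _]]]].
  intros Hb Hb'.
  destruct (Hsupp c) as [c' [Hc' _]].
  destruct (osum_assoc _ _ _ _ _ Hb Hc') as [x [Hx Hax]].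
  destruct (osum_assoc _ _ _ _ _ Hb' Hc') as [y [Hy Hay]].
  destruct (Hsupp a) as [a' [_ Ha']].
  assert (x = y) as <- by (transitivity a'; [symmetry|]; apply Ha'; assumption).
  destruct (osum_assoc _ _ _ _ _ Hx (osum_comm _ _ _ Hax)) as [u [Hu Hbu]].
  destruct (osum_assoc _ _ _ _ _ Hy (osum_comm _ _ _ Hax)) as [v [Hv Hb'v]].
  assert (u = v) as <- by exact (osum_fun _ _ _ _ Hu Hv).
  destruct (Hsupp u) as [w [_ Hw]].
  transitivity w; [symmetry|]; apply Hw; apply osum_comm; assumption.
Qed.

Lemma osum_eq0 (a b : G) : osum G a b (ezero G) -> a = ezero G.
Proof.
  destruct (ea_ax G) as [_ [_ [_ [_ [H10 H1]]]]].
  intro Hab.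
  destruct (osum_assoc _ _ _ _ _ Hab (osum_comm _ _ _ H10)) as [b1 [Hb1 _]].
  rewrite (H1 _ _ Hb1) in Hab.
  exact (osum_fun _ _ _ _ (ea_sum0 G a) Hab).
Qed.

Lemma osum_le_eq0 (a b c : G) : osum G a b c -> ole G c a -> b = ezero G.
Proof.
  intros Hab [d Hcd].
  destruct (osum_assoc _ _ _ _ _ Hab Hcd) as [bd [Hbd Habd]].
  assert (bd = ezero G) as -> by exact (osum_cancel _ _ _ _ Habd (ea_sum0 G a)).
  exact (osum_eq0 _ _ Hbd).
Qed.

Lemma ole_trans (a b c : G) : ole G a b -> ole G b c -> ole G a c.
Proof.
  intros [x Hx] [y Hy].
  destruct (osum_assoc _ _ _ _ _ Hx Hy) as [z [_ Hz]].
  exists z; exact Hz.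
Qed.

Lemma osum_le_defined (a a' b b' s : G) :
  ole G a a' -> ole G b b' -> osum G a' b' s -> exists c, osum G a b c.
Proof.
  intros [p Hp] [q Hq] Hs.
  destruct (osum_interchange _ _ _ _ _ _ _ Hp Hq Hs) as [c [_ [Hc _]]].
  exists c; exact Hc.
Qed.

End EffectAlgebraLaws.

Definition additive (E G : PA) (f : E -> G) : Prop :=
  forall a b c, osum E a b c -> osum G (f a) (f b) (f c).

Section AdditiveMaps.
Variables E G : EA.

Lemma additive_zero (f : E -> G) : additive E G f -> f (ezero E) = ezero G.
Proof. intro Hf. apply ea_idem0, Hf, ea_sum0. Qed.

Lemma additive_osum_r (f g s : E -> G) :
  additive E G f -> additive E G s -> (forall a, osum G (f a) (g a) (s a)) ->
  additive E G g.
Proof.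
  intros Hf Hs Hfg a b c Habc.
  destruct (osum_interchange _ _ _ _ _ _ _ _ (Hfg a) (Hfg b) (Hs _ _ _ Habc))
    as [fab [gab [Hfab [Hgab Hc]]]].
  rewrite (osum_fun _ _ _ _ _ Hfab (Hf _ _ _ Habc)) in Hc.
  rewrite (osum_cancel _ _ _ _ _ Hc (Hfg c)) in Hgab.
  exact Hgab.
Qed.

Lemma additive_osum (f g s w : E -> G) :
  additive E G f -> additive E G g -> additive E G w ->
  (forall a, osum G (f a) (g a) (s a)) -> (forall a, ole G (s a) (w a)) ->
  additive E G s.
Proof.
  intros Hf Hg Hw Hfg Hsw a b c Habc.
  destruct (osum_le_defined _ _ _ _ _ _ (Hsw a) (Hsw b) (Hw _ _ _ Habc)) as [sab Hsab].
  destruct (osum_interchange _ _ _ _ _ _ _ _ (Hfg a) (Hfg b) Hsab)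
    as [fab [gab [Hfab [Hgab Hs]]]].
  rewrite (osum_fun _ _ _ _ _ Hfab (Hf _ _ _ Habc)),
          (osum_fun _ _ _ _ _ Hgab (Hg _ _ _ Habc)) in Hs.
  rewrite (osum_fun _ _ _ _ _ Hs (Hfg c)) in Hsab.
  exact Hsab.
Qed.

Lemma in_Hh_intro (h g : E -> G) :
  additive E G g -> (forall a, ole G (g a) (h a)) -> in_Hh E G h g.
Proof. intros Hg Hgh. split; [exact (additive_zero g Hg) | split; assumption]. Qed.

End AdditiveMaps.

Section BoundedAdditiveMaps.
Variables (E G : EA) (h : E -> G) (Hh : is_hom E G h).

Notation H := (Hh_PA E G h Hh).

Lemma Hh_eq (x y : H) : (forall a, proj1_sig x a = proj1_sig y a) -> x = y.
Proof.
  destruct x as [f pf], y as [g pg]; simpl; intro Hfg.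
  apply functional_extensionality in Hfg; subst g.
  f_equal; apply proof_irrelevance.
Qed.

Lemma Hh_additive (x : H) : additive E G (proj1_sig x).
Proof. exact (proj1 (proj2 (proj2_sig x))). Qed.

Lemma Hh_le (x : H) (a : E) : ole G (proj1_sig x a) (h a).
Proof. exact (proj2 (proj2 (proj2_sig x)) a). Qed.

Lemma Hh_osum_assoc (x y z xy xyz : H) : osum H x y xy -> osum H xy z xyz ->
  exists yz, osum H y z yz /\ osum H x yz xyz.
Proof.
  intros Hxy Hxyz.
  destruct (choice (fun a w => osum G (proj1_sig y a) (proj1_sig z a) w /\
                               osum G (proj1_sig x a) w (proj1_sig xyz a)))
    as [yz Hyz].
  { intro a. exact (osum_assoc _ _ _ _ _ _ (Hxy a) (Hxyz a)). }
  assert (Hyz_le : forall a, ole G (yz a) (proj1_sig xyz a)).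
  { intro a. exists (proj1_sig x a). apply osum_comm, (proj2 (Hyz a)). }
  assert (Hin : in_Hh E G h yz).
  { apply in_Hh_intro.
    - exact (additive_osum _ _ _ _ _ _ (Hh_additive y) (Hh_additive z)
               (Hh_additive xyz) (fun a => proj1 (Hyz a)) Hyz_le).
    - intro a. exact (ole_trans _ _ _ _ (Hyz_le a) (Hh_le xyz a)). }
  exists (exist _ yz Hin); split; intro a; apply Hyz.
Qed.

Lemma Hh_supplement (x : H) : exists! y, osum H x y (eone H).
Proof.
  destruct (choice (fun a w => osum G (proj1_sig x a) w (h a))) as [y Hy].
  { exact (Hh_le x). }
  assert (Hin : in_Hh E G h y).
  { apply in_Hh_intro.
    - exact (additive_osum_r _ _ _ _ _ (Hh_additive x) (proj2 Hh) Hy).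
    - intro a. exists (proj1_sig x a). apply osum_comm, Hy. }
  exists (exist _ y Hin); split; [exact Hy|].
  intros y' Hy'. apply Hh_eq; intro a.
  exact (osum_cancel _ _ _ _ _ (Hy a) (Hy' a)).
Qed.

Lemma Hh_zero_one (x c : H) : osum H x (eone H) c -> x = ezero H.
Proof.
  intro Hxc. apply Hh_eq; intro a.
  exact (osum_le_eq0 _ _ _ _ (osum_comm _ _ _ _ (Hxc a)) (Hh_le c a)).
Qed.

Lemma Hh_is_EA : is_EA H.
Proof.
  split; [|split; [|split; [|split; [|split]]]].
  - intros x y z z' Hz Hz'. apply Hh_eq; intro a. exact (osum_fun _ _ _ _ _ (Hz a) (Hz' a)).
  - intros x y z Hz a. exact (osum_comm _ _ _ _ (Hz a)).
  - exact Hh_osum_assoc.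
  - exact Hh_supplement.
  - intro a. apply ea_sum0.
  - exact Hh_zero_one.
Qed.

Lemma bihom_curry (F : EA) (beta : E -> F -> G) :
  is_bihom E F G beta -> (forall a, beta a (eone F) = h a) ->
  exists phi : F -> H, is_hom F H phi /\ forall b a, proj1_sig (phi b) a = beta a b.
Proof.
  intros [Hbeta_r [Hbeta_l _]] Hbeta1.
  assert (Hin : forall b, in_Hh E G h (fun a => beta a b)).
  { intro b. apply in_Hh_intro; [exact (proj2 (Hbeta_l b))|].
    intro a. destruct (proj1 (proj2 (proj2 (proj2 (ea_ax F)))) b) as [b' [Hbb' _]].
    exists (beta a b'). rewrite <- Hbeta1. exact (proj2 (Hbeta_r a) _ _ _ Hbb'). }
  exists (fun b => exist _ (fun a => beta a b) (Hin b)); split; [split|reflexivity].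
  - apply Hh_eq; exact Hbeta1.
  - intros b c d Hbcd a. exact (proj2 (Hbeta_r a) _ _ _ Hbcd).
Qed.

Lemma hom_uncurry (F : EA) (phi : F -> H) :
  is_hom F H phi -> is_bihom E F G (fun a b => proj1_sig (phi b) a).
Proof.
  intros [Hphi1 Hphi]. split; [|split].
  - intro a. assert (Ha : additive F G (fun b => proj1_sig (phi b) a))
      by (intros b c d Hbcd; exact (Hphi _ _ _ Hbcd a)).
    exact (conj (additive_zero _ _ _ Ha) Ha).
  - intro b. exact (conj (proj1 (proj2_sig (phi b))) (Hh_additive (phi b))).
  - rewrite Hphi1. exact (proj1 Hh).
Qed.

End BoundedAdditiveMaps.

Lemma bihom_comp_hom (E F T G : EA) (t : E -> F -> T) (k : T -> G) :
  is_bihom E F T t -> is_hom T G k -> is_bihom E F G (fun a b => k (t a b)).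
Proof.
  intros [Ht_r [Ht_l Ht1]] Hk.
  pose proof (hom_zero _ _ _ Hk) as Hk0.
  split; [|split].
  - intro a. destruct (Ht_r a) as [Ht0 Ht].
    split; [rewrite Ht0; exact Hk0 | intros b c d Hbcd; exact (proj2 Hk _ _ _ (Ht _ _ _ Hbcd))].
  - intro b. destruct (Ht_l b) as [Ht0 Ht].
    split; [rewrite Ht0; exact Hk0 | intros a c d Hacd; exact (proj2 Hk _ _ _ (Ht _ _ _ Hacd))].
  - rewrite Ht1. exact (proj1 Hk).
Qed.

Lemma tensor_hom_ext (E F T G : EA) (t : E -> F -> T) (k1 k2 : T -> G) :
  is_tensor E F T t -> is_hom T G k1 -> is_hom T G k2 ->
  (forall a b, k1 (t a b) = k2 (t a b)) -> k1 = k2.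
Proof.
  intros [Ht Huniv] Hk1 Hk2 Hk12.
  destruct (Huniv G _ (bihom_comp_hom _ _ _ _ t k1 Ht Hk1)) as [k [_ Hk]].
  transitivity k; [symmetry|]; apply Hk; split; auto.
Qed.

Theorem theorem3p3 : forall (E : EA),
  (* [E,G]_h is an effect algebra for every object h : E -> G of E|EA *)
  (forall (G : EA) (h : E -> G) (Hh : is_hom E G h), is_EA (Hh_PA E G h Hh)) /\
  (* for a tensor product (T,t) of E and F, morphisms iota_{E,F} -> h
     (homs k : T -> G with k (a (x) 1) = h a) correspond bijectively to
     homs F -> [E,G]_h via k |-> (b |-> k (- (x) b)) *)
  (forall (F T : EA) (t : E -> F -> T), is_tensor E F T t ->
   forall (G : EA) (h : E -> G) (Hh : is_hom E G h),
     (forall k : T -> G, is_hom T G k -> (forall a, k (t a (eone F)) = h a) ->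
        exists phi : F -> Hh_PA E G h Hh, is_hom F (Hh_PA E G h Hh) phi /\
          forall b a, proj1_sig (phi b) a = k (t a b)) /\
     (forall phi : F -> Hh_PA E G h Hh, is_hom F (Hh_PA E G h Hh) phi ->
        exists k : T -> G, is_hom T G k /\ (forall a, k (t a (eone F)) = h a) /\
          forall b a, k (t a b) = proj1_sig (phi b) a) /\
     (forall k1 k2 : T -> G, is_hom T G k1 -> is_hom T G k2 ->
        (forall a b, k1 (t a b) = k2 (t a b)) -> k1 = k2)).
Proof.
  intro E. split; [exact (Hh_is_EA E)|].
  intros F T t Htensor G h Hh. split; [|split].
  - intros k Hk Hkh.
    exact (bihom_curry E G h Hh F _ (bihom_comp_hom _ _ _ _ t k (proj1 Htensor) Hk) Hkh).
  - intros phi Hphi.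
    destruct (proj2 Htensor G _ (hom_uncurry E G h Hh F phi Hphi)) as [k [[Hk Hkt] _]].
    exists k; split; [exact Hk | split; intros; rewrite Hkt; [|reflexivity]].
    rewrite (proj1 Hphi). reflexivity.
  - intros k1 k2. exact (tensor_hom_ext E F T G t k1 k2 Htensor).
Qed.
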